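(* Let $H_1, H_2$ be histories generated by KSFTM with $H_2$ a strict extension of $H_1$. Let $T_i$ be a transaction of $H_1$ and $T_j$ a transaction of $H_2$ that are incarnations of each other (i.e. $its_i = its_j$). If $wts_i < wts_j$, then $cts_i < cts_j$.
   Context: In the algorithm KSFTM, a transaction $T_i$ is given, in its begin operation, a current timestamp $cts_i$ (the value of a global atomic counter, which is then incremented) and an initial timestamp $its_i$ (equal to $cts_i$ for a first invocation, otherwise equal to the $its$ of the first incarnation, passed by the application when re-invoking an aborted transaction); its working timestamp is $wts_i = cts_i + C\,(cts_i - its_i)$ for a fixed constant $C>0$. These values never change afterwards. Two transactions with the same $its$ are incarnations of each other. A history $H'$ is a strict extension of $H$ if $H$ is a proper prefix of $H'$. *)

From HB Require Import structures.
From mathcomp Require Import all_boot all_order all_algebra.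
Set Implicit Arguments. Unset Strict Implicit. Unset Printing Implicit Defensive.
Import Order.TTheory GRing.Theory Num.Theory.

Definition txn := (nat * (nat * nat))%type.
Definition tid (T : txn) : nat := T.1.
Definition cts (T : txn) : nat := T.2.1.
Definition its (T : txn) : nat := T.2.2.

Definition wts (R : realFieldType) (C : R) (T : txn) : R :=
  (cts T)%:R + C * ((cts T)%:R - (its T)%:R).

(* Events of a history. The begin event carries the timestamps assigned
   to the transaction in its begin operation. *)
Inductive event :=
  | Begin of txn
  | Read of nat & nat      (* tid, t-object *)
  | Write of nat & nat     (* tid, t-object *)
  | TryC of nat            (* tid *)
  | Commit of nat          (* tid *)
  | Abort of nat.          (* tid *)

Definition history := seq event.

Definition begin_of (e : event) : option txn :=
  if e is Begin T then Some T else None.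

Definition begins (H : history) : seq txn := pmap begin_of H.

Definition txn_of (T : txn) (H : history) : Prop := T \in begins H.

Definition strict_ext (H1 H2 : history) : Prop :=
  exists s, s <> [::] /\ H2 = H1 ++ s.

Definition incarnations (Ti Tj : txn) : Prop := its Ti = its Tj.

(* Histories generated by KSFTM, as far as timestamps are concerned:
   - each begin reads the global atomic counter (starting at 1) and
     increments it, so the k-th begin gets cts = k+1;
   - transaction ids are unique;
   - its = cts for a first invocation, otherwise it is the its of the
     first incarnation, which began earlier (its = cts for it). *)
Definition ksftm_gen (H : history) : Prop :=
  let B := begins H in
  [/\ forall k, k < size B -> cts (nth (0, (0, 0)) B k) = k.+1,
      uniq (map tid B) &
      forall k, k < size B ->
        let T := nth (0, (0, 0)) B k in
        its T = cts T \/
        exists2 k', k' < k &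
          let T' := nth (0, (0, 0)) B k' in its T' = cts T' /\ its T = its T'].

(* For incarnations of the same transaction, [wts = (1 + C) cts - C its] with a
   common [its], so for [C >= 0] the working timestamp is a nondecreasing
   function of [cts]; hence [wts_i < wts_j] forces [cts_i < cts_j]. *)
From mathcomp Require Import all_boot all_order all_algebra.
From mathcomp Require Import ring.
Import Order.TTheory GRing.Theory Num.Theory.
Local Open Scope ring_scope.

Lemma wts_incarnationsB (R : realFieldType) (C : R) (Ti Tj : txn) :
  incarnations Ti Tj ->
  wts C Tj - wts C Ti = (1 + C) * ((cts Tj)%:R - (cts Ti)%:R).
Proof. by rewrite /incarnations /wts => ->; ring. Qed.

Lemma ler_wts_incarnations (R : realFieldType) (C : R) (Ti Tj : txn) :
  0 <= C -> incarnations Ti Tj -> (cts Ti <= cts Tj)%N ->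
  wts C Ti <= wts C Tj.
Proof.
move=> C_ge0 inc le_cts.
rewrite -subr_ge0 wts_incarnationsB // mulr_ge0 //.
- by rewrite addr_ge0.
- by rewrite subr_ge0 ler_nat.
Qed.

Lemma wts_incarnations_ltn_cts (R : realFieldType) (C : R) (Ti Tj : txn) :
  0 <= C -> incarnations Ti Tj -> wts C Ti < wts C Tj ->
  (cts Ti < cts Tj)%N.
Proof.
move=> C_ge0 inc; apply: contraTT; rewrite -leqNgt -leNgt => le_cts.
by apply: ler_wts_incarnations => //; rewrite /incarnations inc.
Qed.

Theorem lemma7 (R : realFieldType) (C : R) (H1 H2 : history) (Ti Tj : txn) :
  0 < C ->
  ksftm_gen H1 -> ksftm_gen H2 -> strict_ext H1 H2 ->
  txn_of Ti H1 -> txn_of Tj H2 -> incarnations Ti Tj ->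
  wts C Ti < wts C Tj ->
  (cts Ti < cts Tj)%N.
Proof.
move=> C_gt0 _ _ _ _ _.
exact: wts_incarnations_ltn_cts (ltW C_gt0).
Qed.
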